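(* Let $M$ be a finite abelian group of order $m \ge 2$, and let $J \colon M \times M \to \mathbf{C}$ be a Jacobi function on $M$. Then there is a unique field structure on the set $F = \hat{M} \sqcup \{0\}$, in which $0$ is the additive identity and the multiplication extends the group law of $\hat{M}$, such that for all $\alpha, \beta \in M$, \[ J(\alpha, \beta) = \frac{1}{m} \sum_{\substack{x+y=1,\\ x,y \in F \setminus \{0\}}} \alpha(x)\, \beta(y), \] where $+$ and $1$ denote the addition and multiplicative identity of this field.
   Context: $M$ is a finite abelian group written multiplicatively with identity $1$. For $\alpha \in M$, $\delta(\alpha)=1$ if $\alpha = 1$ and $\delta(\alpha)=0$ otherwise. $\hat{M}$ denotes the Pontryagin dual of $M$ (group of homomorphisms $M \to \mathbf{C}^*$), written multiplicatively; for $\alpha \in M$ and $x \in \hat{M}$, $\alpha(x)$ denotes the value of the character $x$ at $\alpha$. A Jacobi function on $M$ is a function $J \colon M \times M \to \mathbf{C}$ satisfying: (A) $J(\alpha,\beta)=J(\beta,\alpha)$ for all $\alpha,\beta \in M$; (B) setting $J^*(\alpha,\beta) = -\delta(\alpha)-\delta(\beta)+J(\alpha,\beta)$, one has $J^*(\alpha,\beta)J^*(\alpha\beta,\gamma)=J^*(\alpha,\beta\gamma)J^*(\beta,\gamma)$ for all $\alpha,\beta,\gamma \in M$; (C) for all $\alpha_1,\alpha_2,\alpha_3,\alpha_4 \in M$, $\sum_{\beta \in M} J(\alpha_1\beta,\alpha_2\beta^{-1})J(\alpha_3\beta,\alpha_4\beta^{-1}) = J(\alpha_1\alpha_4,\alpha_2\alpha_3)$.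 *)

From HB Require Import structures.
From mathcomp Require Import all_boot all_order all_algebra all_fingroup.
From mathcomp Require Import boolp classical_sets fsbigop.
Set Implicit Arguments. Unset Strict Implicit. Unset Printing Implicit Defensive.
Import Order.TTheory GRing.Theory Num.Theory.
Local Open Scope ring_scope.

Definition delta (M : finGroupType) (C : numClosedFieldType) (a : M) : C :=
  if a == 1%g then 1 else 0.

Definition is_Jacobi (M : finGroupType) (C : numClosedFieldType)
    (J : M -> M -> C) : Prop :=
  let Js := fun a b => - delta C a - delta C b + J a b in
  [/\ (forall a b, J a b = J b a),
      (forall a b c, Js a b * Js (a * b)%g c = Js a (b * c)%g * Js b c) &
      (forall a1 a2 a3 a4,
          \sum_(b : M) J (a1 * b)%g (a2 * b^-1)%g * J (a3 * b)%g (a4 * b^-1)%g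
          = J (a1 * a4)%g (a2 * a3)%g)].

Definition is_char (M : finGroupType) (C : numClosedFieldType)
    (f : {ffun M -> C}) : bool :=
  [forall a, forall b, f (a * b)%g == f a * f b] && [forall a, f a != 0].

Definition dual (M : finGroupType) (C : numClosedFieldType) :=
  {f : {ffun M -> C} | is_char f}.

(* value alpha(x) of the character x at alpha *)
Definition chv (M : finGroupType) (C : numClosedFieldType) (x : dual M C)
    (a : M) : C := val x a.

(* F = \hat M disjoint-union {0}, with None playing the role of 0. *)
Definition Fset (M : finGroupType) (C : numClosedFieldType) := option (dual M C).

Definition field_axioms (F : Type) (add mul : F -> F -> F) (z o : F) : Prop :=
  [/\ associative add, commutative add, left_id z add,
      (forall x, exists y, add x y = z) &
   [/\ associative mul, commutative mul, left_id o mul, o <> z &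
   [/\ left_distributive mul add &
       (forall x, x <> z -> exists y, mul x y = o)]]].

Definition extends_dual_law (M : finGroupType) (C : numClosedFieldType)
    (mul : Fset M C -> Fset M C -> Fset M C) : Prop :=
  forall x y : dual M C, exists z : dual M C,
    mul (Some x) (Some y) = Some z /\ forall a, chv z a = chv x a * chv y a.

Definition jacobi_sum (M : finGroupType) (C : numClosedFieldType)
    (add : Fset M C -> Fset M C -> Fset M C) (one : Fset M C) (a b : M) : C :=
  (#|M|%:R)^-1 *
  \sum_(p \in [set p : dual M C * dual M C | add (Some p.1) (Some p.2) = one])
      chv p.1 a * chv p.2 b.

From HB Require Import structures.
From mathcomp Require Import all_boot all_order all_algebra all_fingroup cyclic.
From mathcomp Require Import zify ring.
From mathcomp Require boolp classical_sets fsbigop.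
Set Implicit Arguments. Unset Strict Implicit. Unset Printing Implicit Defensive.
Import Order.TTheory GRing.Theory Num.Theory.
Local Open Scope ring_scope.

(* Characters separate the points of the finite abelian group M (they extend from
   subgroups one cyclic factor at a time), so the dual D has m = |M| elements and J
   has a unique expansion J a b = m^-1 * \sum_(x, y) N x y * x(a) * y(b).  Axiom (C)
   becomes [x z = y w] N(x,y) N(z,w) = [z = y] [w = x] N(x,y): so N is {0,1}-valued and,
   reading N(x,y) = 1 as "x + y = 1", there is at most one z with x/z + y/z = 1; this z
   (or 0 if there is none) is x + y.  Axiom (B) becomes a convolution identity between
   the coefficients of J^*, which is exactly the associativity of this addition.  The
   element -1 exists, for otherwise the sum of all elements of D would be a nonzero
   element fixed by multiplication by every r in D.  Conversely, in any field with the
   required properties, uniqueness of the expansion identifies "x + y = 1" with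
   N(x,y) = 1, and scaling by z^-1 determines every sum. *)

Lemma sum_delta (R : pzSemiRingType) (T : finType) (t0 : T) (F : T -> R) :
  \sum_t (t == t0)%:R * F t = F t0.
Proof.
by rewrite (bigD1 t0) //= eqxx mul1r big1 ?addr0 // => t /negPf->; rewrite mul0r.
Qed.

Lemma mul_fixed_eq0 (R : idomainType) (c s : R) : c != 1 -> c * s = s -> s = 0.
Proof.
move=> c_neq1 /eqP; rewrite -subr_eq0 -{2}[s]mul1r -mulrBl mulf_eq0 subr_eq0.
by rewrite (negPf c_neq1) => /eqP.
Qed.

Lemma bool_natr_inj (R : nzRingType) (b1 b2 : bool) : (b1%:R : R) = b2%:R -> b1 = b2.
Proof. by case: b1; case: b2 => // /eqP; rewrite ?oner_eq0 // eq_sym oner_eq0. Qed.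

Lemma field_mul0l (F : Type) (add mul : F -> F -> F) (z o : F) :
  field_axioms add mul z o -> left_zero z mul.
Proof.
case=> addA addC add0 addN [_ mulC _ _ [mulDl _]] y.
have dbl : mul z y = add (mul z y) (mul z y) by rewrite -mulDl add0.
have [w zw] := addN (mul z y).
have e1 : add (mul z y) z = mul z y by rewrite addC add0.
have e2 : add (mul z y) z = z by rewrite -[X in add _ X = _]zw addA -dbl zw.
by rewrite -e1 e2.
Qed.

Lemma eq_option (T : eqType) (X Y : option T) :
  (forall z, (X == Some z) = (Y == Some z)) -> X = Y.
Proof.
case: X => [x|]; case: Y => [y|] // XY; last by move: (XY y); rewrite eqxx.
  by move: (XY x); rewrite eqxx => /esym/eqP.
by move: (XY x); rewrite eqxx.
Qed.

Section SumManipulations.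
Variables (R : comPzRingType) (T I : finType).

Lemma mul_sum2 (f g : T -> T -> R) :
  (\sum_x \sum_y f x y) * (\sum_z \sum_w g z w) =
  \sum_x \sum_y \sum_z \sum_w f x y * g z w.
Proof.
rewrite mulr_suml; apply: eq_bigr => x _; rewrite mulr_suml; apply: eq_bigr => y _.
by rewrite mulr_sumr; apply: eq_bigr => z _; rewrite mulr_sumr.
Qed.

Lemma exchange_big4 (F : I -> T -> T -> T -> T -> R) :
  \sum_i \sum_x \sum_y \sum_z \sum_w F i x y z w =
  \sum_x \sum_y \sum_z \sum_w \sum_i F i x y z w.
Proof.
rewrite exchange_big; apply: eq_bigr => x _; rewrite exchange_big.
by apply: eq_bigr => y _; rewrite exchange_big; apply: eq_bigr => z _; rewrite exchange_big.
Qed.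

End SumManipulations.

Definition hom_on (C : numClosedFieldType) (M : finGroupType) (H : {set M}) (f : M -> C) :=
  {in H &, {morph f : a b / (a * b)%g >-> a * b}} /\ f 1%g = 1.

Lemma hom_is_char (C : numClosedFieldType) (M : finGroupType) (f : M -> C) :
  hom_on [set: M] f -> is_char [ffun a => f a].
Proof.
case=> fM f1; apply/andP; split; apply/forallP => a.
  by apply/forallP => b; rewrite !ffunE fM ?inE.
rewrite ffunE; apply: contra_neq (oner_neq0 C) => fa0.
by rewrite -f1 -(mulgV a) fM ?inE // fa0 mul0r.
Qed.

Section DualGroup.
Variables (C : numClosedFieldType) (M : finGroupType).
Implicit Types (x y : dual M C) (a b : M).

Lemma chvM x a b : chv x (a * b)%g = chv x a * chv x b.
Proof. by rewrite /chv; case: x => f /= /andP[/forallP/(_ a)/forallP/(_ b)/eqP]. Qed.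

Lemma chv_neq0 x a : chv x a != 0.
Proof. by rewrite /chv; case: x => f /= /andP[_ /forallP]. Qed.

Lemma chv1 x : chv x 1%g = 1.
Proof. by apply: (mulIf (chv_neq0 x 1%g)); rewrite -chvM mulg1 mul1r. Qed.

Lemma chvX x a n : chv x (a ^+ n)%g = chv x a ^+ n.
Proof. by elim: n => [|n IHn]; rewrite ?chv1 // expgS chvM IHn exprS. Qed.

Lemma chvV x a : chv x a^-1%g = (chv x a)^-1.
Proof.
by apply: (mulfI (chv_neq0 x a)); rewrite -chvM mulgV chv1 divff ?chv_neq0.
Qed.

Lemma eq_dual x y : chv x =1 chv y -> x = y.
Proof. by move=> xy; apply/val_inj/ffunP. Qed.

(* Character values are roots of X^|M| - 1, so the dual embeds in a finite type. *)
Definition unity_roots : seq C := sval (closed_field_poly_normal ('X^#|M| - 1)).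

Lemma chv_unity_root x a : chv x a \in unity_roots.
Proof.
have M_gt0 : (0 < #|M|)%N by apply/card_gt0P; exists 1%g.
have := svalP (closed_field_poly_normal ('X^#|M| - 1 : {poly C})).
rewrite -/unity_roots lead_coefXnsubC // scale1r => def_p.
rewrite -root_prod_XsubC -def_p /root !hornerE -chvX -cardsT.
by rewrite expg_cardG ?inE // chv1 subrr.
Qed.

Definition dual_code x : {ffun M -> seq_sub unity_roots} :=
  [ffun a => SeqSub (chv_unity_root x a)].
Definition dual_decode (f : {ffun M -> seq_sub unity_roots}) : option (dual M C) :=
  insub [ffun a => ssval (f a)].

Lemma dual_codeK : pcancel dual_code dual_decode.
Proof.
move=> x; rewrite /dual_decode (_ : [ffun a => _] = val x) ?valK //.
by apply/ffunP => a; rewrite !ffunE.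
Qed.

Lemma dual_pickleK : pcancel (pickle \o dual_code) (pcomp dual_decode unpickle).
Proof. exact: pcan_pickleK dual_codeK. Qed.

Lemma dual_one_subproof : is_char [ffun _ : M => 1 : C].
Proof. by apply: hom_is_char; split=> // a b _ _; rewrite mulr1. Qed.

Lemma dual_mul_subproof x y : is_char [ffun a => chv x a * chv y a].
Proof.
by apply: hom_is_char; split=> [a b _ _|]; rewrite ?chvM 1?mulrACA // !chv1 mulr1.
Qed.

Lemma dual_inv_subproof x : is_char [ffun a => (chv x a)^-1].
Proof. by apply: hom_is_char; split=> [a b _ _|]; rewrite ?chvM ?invfM // chv1 invr1. Qed.

Definition dual_one : dual M C := Sub _ dual_one_subproof.
Definition dual_mul x y : dual M C := Sub _ (dual_mul_subproof x y).
Definition dual_inv x : dual M C := Sub _ (dual_inv_subproof x).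

Lemma chv_one a : chv dual_one a = 1.
Proof. by rewrite /chv /= ffunE. Qed.

Lemma chv_mul x y a : chv (dual_mul x y) a = chv x a * chv y a.
Proof. by rewrite /chv /= ffunE. Qed.

Lemma chv_inv x a : chv (dual_inv x) a = (chv x a)^-1.
Proof. by rewrite /chv /= ffunE. Qed.

Lemma dual_mulA : associative dual_mul.
Proof. by move=> x y z; apply: eq_dual => a; rewrite !chv_mul mulrA. Qed.

Lemma dual_mul1 : left_id dual_one dual_mul.
Proof. by move=> x; apply: eq_dual => a; rewrite chv_mul chv_one mul1r. Qed.

Lemma dual_mulV : left_inverse dual_one dual_inv dual_mul.
Proof.
by move=> x; apply: eq_dual => a; rewrite chv_mul chv_inv chv_one mulVf ?chv_neq0.
Qed.

End DualGroup.

(* Keep the choice structure of the underlying sig type: the finitely supported sum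
   in [jacobi_sum] was elaborated with it. *)
HB.instance Definition _ (C : numClosedFieldType) (M : finGroupType) :=
  Choice.copy (dual M C) (sig (@is_char M C)).
HB.instance Definition _ (C : numClosedFieldType) (M : finGroupType) :=
  Choice_isCountable.Build (dual M C) (@dual_pickleK C M).
HB.instance Definition _ (C : numClosedFieldType) (M : finGroupType) :
  isFinite (dual M C) := PCanIsFinite (@dual_codeK C M).
HB.instance Definition _ (C : numClosedFieldType) (M : finGroupType) :=
  Finite_isGroup.Build (dual M C) (@dual_mulA C M) (@dual_mul1 C M) (@dual_mulV C M).

Lemma dual_mulC (C : numClosedFieldType) (M : finGroupType) (x y : dual M C) :
  commute x y.
Proof. by apply: eq_dual => a; rewrite !chv_mul mulrC. Qed.

Section HomExtension.
Variables (C : numClosedFieldType) (M : finGroupType).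
Hypothesis cMM : abelian [set: M].

Lemma commute_ab (a b : M) : commute a b.
Proof. by apply: (centsP cMM); rewrite inE. Qed.

Lemma hom_onX (H : {group M}) (f : M -> C) a n : hom_on H f -> a \in H ->
  f (a ^+ n)%g = f a ^+ n.
Proof.
case=> fM f1 Ha; elim: n => [|n IHn]; first by rewrite f1.
by rewrite expgS fM ?groupX // IHn exprS.
Qed.

Section OneStep.
Variables (H : {group M}) (f : M -> C) (g : M) (t : C).
Hypotheses (fH : hom_on H f)
           (ft : forall n, (g ^+ n \in H)%g -> f (g ^+ n)%g = t ^+ n).

Lemma ext_value_indep y i j : (y * g ^- i \in H)%g -> (y * g ^- j \in H)%g ->
  f (y * g ^- i)%g * t ^+ i = f (y * g ^- j)%g * t ^+ j.
Proof.
wlog le_ij : i j / (i <= j)%N.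
  by move=> W Hi Hj; case: (leqP i j) => [|/ltnW] ?; [|symmetry]; apply: W.
move=> Hi Hj; have def_i : (y * g ^- i = (y * g ^- j) * g ^+ (j - i))%g.
  by rewrite expgnFr // mulgA mulgKV.
have Hji : (g ^+ (j - i) \in H)%g by rewrite -(groupMl _ Hj) -def_i.
by rewrite def_i fH.1 // ft // -mulrA -exprD subnK.
Qed.

(* [ext_hom (h * g ^+ i) = f h * t ^+ i] for [h \in H]; by [ft] this does not
   depend on the decomposition. *)
Definition ext_hom y : C :=
  if [pick i : 'I_#[g]%g | (y * g ^- i \in H)%g] is Some i
  then f (y * g ^- i)%g * t ^+ i else 0.

Lemma ext_homE y i : (y * g ^- i \in H)%g -> ext_hom y = f (y * g ^- i)%g * t ^+ i.
Proof.
move=> Hi; rewrite /ext_hom; case: pickP => [j Hj|]; first exact: ext_value_indep.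
move=> /(_ (Ordinal (ltn_pmod i (order_gt0 g)))) /=.
by rewrite expg_mod_order Hi.
Qed.

Lemma ext_hom_on : hom_on (H <*> <[g]>)%g ext_hom.
Proof.
have witness y : (y \in H <*> <[g]>)%g -> exists i, (y * g ^- i \in H)%g.
  rewrite comm_joingE; last by apply/centC/(sub_abelian_cent2 cMM); rewrite subsetT.
  by case/mulsgP=> h _ Hh /cycleP[i ->] ->; exists i; rewrite mulgK.
split; last by rewrite (@ext_homE _ 0) ?mul1g ?invg1 ?fH.2 ?expr0 ?mulr1.
move=> y z /witness[i Hi] /witness[j Hj].
have Hij : (y * z * g ^- (i + j) = (y * g ^- i) * (z * g ^- j))%g.
  rewrite expgD invMg -!mulgA; congr (y * _)%g.
  by rewrite (commute_ab (g ^- j)) mulgA (commute_ab z) mulgA.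
rewrite (ext_homE Hi) (ext_homE Hj) (@ext_homE _ (i + j)); last by rewrite Hij groupM.
by rewrite Hij fH.1 // exprD mulrACA.
Qed.

Lemma ext_hom_eq : {in H, ext_hom =1 f}.
Proof. by move=> y Hy; rewrite (@ext_homE _ 0) ?invg1 ?mulg1 ?expr0 ?mulr1. Qed.

Lemma ext_hom_gen : ext_hom g = t.
Proof. by rewrite (@ext_homE _ 1) ?expg1 ?mulgV ?fH.2 ?mul1r ?expr1. Qed.

End OneStep.

Lemma exists_compatible_root (H : {group M}) (f : M -> C) g : hom_on H f ->
  exists t, forall n, (g ^+ n \in H)%g -> f (g ^+ n)%g = t ^+ n.
Proof.
move=> fH; have : exists k, (0 < k)%N && (g ^+ k \in H)%g.
  by exists #[g]%g; rewrite order_gt0 expg_order group1.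
case/ex_minnP=> k /andP[k_gt0 Hgk] k_min.
exists (k.-root (f (g ^+ k)%g)) => n Hgn.
have k_dvd_n : (k %| n)%N.
  have Hgr : (g ^+ (n %% k) \in H)%g.
    by move: Hgn; rewrite {1}(divn_eq n k) expgD mulnC expgM (groupMl _ (groupX _ Hgk)).
  apply: contraT; rewrite /dvdn -lt0n => r_gt0.
  have /k_min : (0 < n %% k)%N && (g ^+ (n %% k) \in H)%g by rewrite r_gt0.
  by rewrite leqNgt ltn_pmod.
by rewrite -(divnK k_dvd_n) mulnC expgM (hom_onX _ fH Hgk) exprM rootCK.
Qed.

Lemma hom_extend (H : {group M}) (f : M -> C) : hom_on H f ->
  exists2 f', hom_on [set: M] f' & {in H, f' =1 f}.
Proof.
move: {2}_.+1 (ltnSn (#|M| - #|H|)) => n.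
elim: n H f => // n IHn H f lt_H_n fH.
have [/subsetP sTH | /subsetPn[g _ Hg]] := boolP ([set: M] \subset H).
  by exists f => //; case: fH => fM f1; split=> // a b Ta Tb; apply: fM; apply: sTH.
have [t ft] := exists_compatible_root g fH.
pose K := (H <*> <[g]>)%G.
have ltHK : (#|H| < #|K|)%N.
  apply/proper_card/properP; split; first exact: joing_subl.
  by exists g => //; apply: (subsetP (joing_subr _ _)); apply: cycle_id.
have leKM : (#|K| <= #|M|)%N by apply: max_card.
have [|f' f'hom f'E] := IHn K _ _ (ext_hom_on fH ft); first lia.
exists f' => // y Hy; rewrite f'E ?ext_hom_eq //.
exact: (subsetP (joing_subl _ _)).
Qed.

Lemma exists_root_neq1 n : (1 < n)%N -> exists2 z : C, z ^+ n = 1 & z != 1.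
Proof.
move=> n_gt1; set r := n.-root (-1 : C).
have rn : r ^+ n = -1 by rewrite rootCK ?(ltnW n_gt1).
exists (r ^+ 2); first by rewrite -exprM mulnC exprM rn sqrrN expr1n.
rewrite sqrf_eq1 negb_or; apply/andP; split; apply: contraTneq isT => r1.
  by move: rn; rewrite r1 expr1n => /eqP; rewrite -addr_eq0 -mulr2n pnatr_eq0.
by have := rootC_lt0 (-1 : C) n_gt1; rewrite -/r r1 ltrN10.
Qed.

Lemma char_separates c : c != 1%g -> exists x : dual M C, chv x c != 1.
Proof.
rewrite -order_gt1 => /exists_root_neq1[z zc z_neq1].
have triv_hom : hom_on [1 M]%G (fun=> 1 : C) by split=> // a b _ _; rewrite mulr1.
have zc_compat n : (c ^+ n \in [1 M])%g -> 1 = z ^+ n.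
  by rewrite inE -order_dvdn => /divnK <-; rewrite mulnC exprM zc expr1n.
have [f fhom fE] := hom_extend (ext_hom_on triv_hom zc_compat).
exists (Sub _ (hom_is_char fhom)); rewrite /chv SubK ffunE fE ?ext_hom_gen //.
exact: (subsetP (joing_subr _ _)) (cycle_id c).
Qed.

End HomExtension.

Section Orthogonality.
Variables (C : numClosedFieldType) (M : finGroupType).
Hypothesis cMM : abelian [set: M].
Local Notation D := (dual M C).
Local Notation m := (#|M|%:R : C).
Implicit Types (x y : D) (a b : M).

Lemma m_neq0 : m != 0.
Proof. by rewrite pnatr_eq0 -lt0n; apply/card_gt0P; exists 1%g. Qed.

Lemma sum_chv x : \sum_a chv x a = (x == 1%g)%:R * m.
Proof.
have [->|x_neq1] := eqVneq x 1%g.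
  by rewrite mul1r (eq_bigr (fun=> 1)) ?sumr_const // => a _; rewrite chv_one.
have [a0 xa0_neq1] : exists a0, chv x a0 != 1.
  apply/existsP; apply: contraR x_neq1 => /existsPn x1.
  by apply/eqP/eq_dual => a; rewrite chv_one; apply/eqP; rewrite -[_ == _]negbK x1.
rewrite mul0r; apply: (mul_fixed_eq0 xa0_neq1).
by rewrite mulr_sumr [RHS](reindex_inj (mulgI a0)); apply: eq_bigr => a _; rewrite chvM.
Qed.

Lemma sum_dual_chv a : \sum_(x : D) chv x a = (a == 1%g)%:R * #|{: D}|%:R.
Proof.
have [->|a_neq1] := eqVneq a 1%g.
  by rewrite mul1r (eq_bigr (fun=> 1)) ?sumr_const // => x _; rewrite chv1.
have [x0 x0a_neq1] := char_separates C cMM a_neq1.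
rewrite mul0r; apply: (mul_fixed_eq0 x0a_neq1).
by rewrite mulr_sumr [RHS](reindex_inj (mulgI x0)); apply: eq_bigr => x _; rewrite chv_mul.
Qed.

Lemma card_dual : #|{: D}| = #|M|.
Proof.
have : \sum_(x : D) \sum_a chv x a = \sum_a \sum_(x : D) chv x a by exact: exchange_big.
under eq_bigr do rewrite sum_chv; under [RHS]eq_bigr do rewrite sum_dual_chv.
by rewrite !sum_delta => /eqP; rewrite eqr_nat => /eqP.
Qed.

Lemma ortho_dual x y : \sum_a chv x a * (chv y a)^-1 = (x == y)%:R * m.
Proof.
by rewrite eq_mulgV1 -sum_chv; apply: eq_bigr => a _; rewrite chv_mul chv_inv.
Qed.

Lemma ortho_elem a b : \sum_x chv x a * (chv x b)^-1 = (a == b)%:R * m.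
Proof.
by rewrite eq_mulgV1 -card_dual -sum_dual_chv; apply: eq_bigr => x _; rewrite chvM chvV.
Qed.

Lemma char_expansion (G : M -> C) a :
  m * G a = \sum_x chv x a * \sum_b G b * (chv x b)^-1.
Proof.
under eq_bigr do rewrite mulr_sumr; rewrite exchange_big /=.
rewrite -(sum_delta a (fun b => m * G b)); apply: eq_bigr => b _.
under [RHS]eq_bigr do rewrite mulrCA.
by rewrite -mulr_sumr ortho_elem eq_sym; ring.
Qed.

Lemma char_sum_inj (A B : D -> C) :
  (forall a, \sum_x chv x a * A x = \sum_x chv x a * B x) -> A =1 B.
Proof.
have coef F x0 : \sum_a (\sum_x chv x a * F x) * (chv x0 a)^-1 = m * F x0.
  under eq_bigr do rewrite mulr_suml; rewrite exchange_big /=.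
  rewrite -(sum_delta x0 (fun x => m * F x)); apply: eq_bigr => x _.
  under eq_bigr do rewrite mulrAC.
  by rewrite -mulr_suml ortho_dual -mulrA.
move=> AB x0; apply: (mulfI m_neq0).
by rewrite -!coef; apply: eq_bigr => a _; rewrite AB.
Qed.

End Orthogonality.

Section CharSumUniqueness.
Variables (C : numClosedFieldType) (M : finGroupType).
Local Notation D := (dual M C).

Lemma char_sum_inj2 (F G : D -> D -> C) :
  (forall a b, \sum_x \sum_y chv x a * chv y b * F x y =
               \sum_x \sum_y chv x a * chv y b * G x y) ->
  forall x y, F x y = G x y.
Proof.
have nest H a b : \sum_x \sum_y chv x a * chv y b * H x y =
                  \sum_x chv x a * \sum_y chv y b * H x y.
  by apply: eq_bigr => x _; rewrite mulr_sumr; apply: eq_bigr => y _; rewrite mulrA.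
move=> FG x y; move: y; apply: char_sum_inj => b; move: x.
by apply: char_sum_inj => a; rewrite -!nest.
Qed.

Lemma char_sum_inj3 (F G : D -> D -> D -> C) :
  (forall a b c, \sum_x \sum_y \sum_z chv x a * chv y b * chv z c * F x y z =
                 \sum_x \sum_y \sum_z chv x a * chv y b * chv z c * G x y z) ->
  forall x y z, F x y z = G x y z.
Proof.
have nest H a b c : \sum_x \sum_y \sum_z chv x a * chv y b * chv z c * H x y z =
                    \sum_x chv x a * \sum_y chv y b * \sum_z chv z c * H x y z.
  apply: eq_bigr => x _; rewrite mulr_sumr; apply: eq_bigr => y _.
  by rewrite !mulr_sumr; apply: eq_bigr => z _; rewrite !mulrA.
move=> FG x y z; move: z; apply: char_sum_inj => c; move: y.
apply: char_sum_inj => b; move: x.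
by apply: char_sum_inj => a; rewrite -!nest.
Qed.

Lemma char_sum_inj4 (F G : D -> D -> D -> D -> C) :
  (forall a b c d,
     \sum_x \sum_y \sum_z \sum_w chv x a * chv y b * chv z c * chv w d * F x y z w =
     \sum_x \sum_y \sum_z \sum_w chv x a * chv y b * chv z c * chv w d * G x y z w) ->
  forall x y z w, F x y z w = G x y z w.
Proof.
have nest H a b c d :
    \sum_x \sum_y \sum_z \sum_w chv x a * chv y b * chv z c * chv w d * H x y z w =
    \sum_x chv x a * \sum_y chv y b * \sum_z chv z c * \sum_w chv w d * H x y z w.
  apply: eq_bigr => x _; rewrite mulr_sumr; apply: eq_bigr => y _.
  rewrite !mulr_sumr; apply: eq_bigr => z _; rewrite !mulr_sumr.
  by apply: eq_bigr => w _; rewrite !mulrA.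
move=> FG x y z w; move: w; apply: char_sum_inj => d; move: z.
apply: char_sum_inj => c; move: y; apply: char_sum_inj => b; move: x.
by apply: char_sum_inj => a; rewrite -!nest.
Qed.

End CharSumUniqueness.

Section JacobiCoefficients.
Variables (C : numClosedFieldType) (M : finGroupType) (J : M -> M -> C).
Hypothesis cMM : abelian [set: M].
Local Notation D := (dual M C).
Local Notation m := (#|M|%:R : C).
Local Notation mV_neq0 := (invr_neq0 (m_neq0 C M)).
Implicit Types (x y z w : D) (a b c : M).

(* In the paper's normalisation, [J a b = m^-1 * \sum_(x + y = 1) x(a) y(b)],
   so [jcoef x y] is expected to be the indicator of [x + y = 1]. *)
Definition jcoef x y : C :=
  m^-1 * \sum_b (\sum_a J a b * (chv x a)^-1) * (chv y b)^-1.

Lemma jacobi_expansion a b :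
  J a b = m^-1 * \sum_x \sum_y chv x a * chv y b * jcoef x y.
Proof.
apply: (mulfI (m_neq0 C M)); rewrite mulrA divff ?m_neq0 // mul1r.
rewrite (char_expansion cMM (J^~ b)); apply: eq_bigr => x _.
apply: (mulfI (m_neq0 C M)).
rewrite mulrCA (char_expansion cMM (fun b => \sum_a J a b * (chv x a)^-1)) !mulr_sumr.
by apply: eq_bigr => y _; rewrite /jcoef [RHS]mulrCA mulVKf ?m_neq0 // mulrA.
Qed.

Lemma jcoefC : (forall a b, J a b = J b a) -> forall x y, jcoef x y = jcoef y x.
Proof.
move=> JC x y; congr (_ * _); under eq_bigr do rewrite mulr_suml.
under [RHS]eq_bigr do rewrite mulr_suml.
by rewrite exchange_big; do 2!apply: eq_bigr => ? _; rewrite JC mulrAC.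
Qed.

Lemma jacobiC_lhs a1 a2 a3 a4 :
  \sum_b J (a1 * b)%g (a2 * b^-1)%g * J (a3 * b)%g (a4 * b^-1)%g =
  m^-1 * \sum_x \sum_y \sum_z \sum_w chv x a1 * chv y a2 * chv z a3 * chv w a4 *
           ((x * z == y * w)%g%:R * jcoef x y * jcoef z w).
Proof.
under eq_bigr do rewrite !jacobi_expansion mulrACA mul_sum2.
rewrite -mulr_sumr exchange_big4 -mulrA; congr (_ * _).
rewrite mulr_sumr; apply: eq_bigr => x _; rewrite mulr_sumr; apply: eq_bigr => y _.
rewrite mulr_sumr; apply: eq_bigr => z _; rewrite mulr_sumr; apply: eq_bigr => w _.
rewrite (eq_bigr (fun b => chv x a1 * chv y a2 * chv z a3 * chv w a4 * jcoef x y *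
                   jcoef z w * (chv (x * z)%g b * (chv (y * w)%g b)^-1))) => [|b _].
  by rewrite -mulr_sumr ortho_dual; field; apply: m_neq0.
by rewrite !chv_mul !chvM !chvV invfM; ring.
Qed.

Lemma jacobiC_rhs a1 a2 a3 a4 :
  J (a1 * a4)%g (a2 * a3)%g =
  m^-1 * \sum_x \sum_y \sum_z \sum_w chv x a1 * chv y a2 * chv z a3 * chv w a4 *
           ((z == y)%:R * (w == x)%:R * jcoef x y).
Proof.
rewrite jacobi_expansion; congr (_ * _); apply: eq_bigr => x _; apply: eq_bigr => y _.
rewrite (eq_bigr (fun z => (z == y)%:R * \sum_w (w == x)%:R *
                   (chv x a1 * chv y a2 * chv z a3 * chv w a4 * jcoef x y))) => [|z _].
  by rewrite sum_delta sum_delta !chvM; ring.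
by rewrite mulr_sumr; apply: eq_bigr => w _; ring.
Qed.

Lemma jacobiC_coef :
  (forall a1 a2 a3 a4,
     \sum_b J (a1 * b)%g (a2 * b^-1)%g * J (a3 * b)%g (a4 * b^-1)%g =
     J (a1 * a4)%g (a2 * a3)%g) ->
  forall x y z w, (x * z == y * w)%g%:R * jcoef x y * jcoef z w =
                  (z == y)%:R * (w == x)%:R * jcoef x y.
Proof.
move=> JC; apply: char_sum_inj4 => a1 a2 a3 a4; apply: (mulfI mV_neq0).
by rewrite -jacobiC_lhs -jacobiC_rhs JC.
Qed.

Definition jacobi_star a b := - delta C a - delta C b + J a b.

Definition jcoef_star x y := jcoef x y - (x == 1%g)%:R - (y == 1%g)%:R.

Lemma jacobi_star_expansion a b :
  jacobi_star a b = m^-1 * \sum_x \sum_y chv x a * chv y b * jcoef_star x y.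
Proof.
have deltaE a' : delta C a' = m^-1 * \sum_x chv x a'.
  by rewrite sum_dual_chv // card_dual // mulrCA mulVf ?m_neq0 // mulr1 /delta; case: eqP.
have termE x y : chv x a * chv y b * jcoef_star x y =
    chv x a * chv y b * jcoef x y - (x == 1%g)%:R * chv y b - (y == 1%g)%:R * chv x a.
  rewrite /jcoef_star; case: (eqVneq x 1%g) => [->|_];
    case: (eqVneq y 1%g) => [->|_]; rewrite ?chv_one /=; ring.
under eq_bigr do (under eq_bigr do rewrite termE; rewrite !sumrB -mulr_sumr sum_delta).
by rewrite !sumrB sum_delta /jacobi_star jacobi_expansion !deltaE; ring.
Qed.

Lemma jacobiB_lhs a b c :
  jacobi_star a b * jacobi_star (a * b)%g c =
  m^-1 * m^-1 * \sum_p \sum_q \sum_r chv p a * chv q b * chv r c *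
    \sum_u jcoef_star (p * u^-1)%g (q * u^-1)%g * jcoef_star u r.
Proof.
rewrite !jacobi_star_expansion mulrACA mul_sum2; congr (_ * _).
under eq_bigr do rewrite exchange_big; rewrite exchange_big.
under [RHS]eq_bigr do under eq_bigr do under eq_bigr do rewrite mulr_sumr.
under [RHS]eq_bigr do under eq_bigr do rewrite exchange_big.
under [RHS]eq_bigr do rewrite exchange_big; rewrite [RHS]exchange_big.
apply: eq_bigr => u _; rewrite [RHS](reindex_inj (mulIg u)); apply: eq_bigr => x _.
rewrite [RHS](reindex_inj (mulIg u)); apply: eq_bigr => y _; apply: eq_bigr => v _.
by rewrite !mulgK !chv_mul !chvM; ring.
Qed.

Lemma jacobiB_rhs a b c :
  jacobi_star a (b * c)%g * jacobi_star b c =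
  m^-1 * m^-1 * \sum_p \sum_q \sum_r chv p a * chv q b * chv r c *
    \sum_y jcoef_star p y * jcoef_star (q * y^-1)%g (r * y^-1)%g.
Proof.
rewrite !jacobi_star_expansion mulrACA mul_sum2; congr (_ * _).
under [RHS]eq_bigr do under eq_bigr do under eq_bigr do rewrite mulr_sumr.
under [RHS]eq_bigr do under eq_bigr do rewrite exchange_big.
under [RHS]eq_bigr do rewrite exchange_big.
apply: eq_bigr => x _; apply: eq_bigr => y _.
rewrite [RHS](reindex_inj (mulIg y)); apply: eq_bigr => u _.
rewrite [RHS](reindex_inj (mulIg y)); apply: eq_bigr => v _.
by rewrite !mulgK !chv_mul !chvM; ring.
Qed.

Lemma jacobiB_coef :
  (forall a b c, jacobi_star a b * jacobi_star (a * b)%g c =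
                 jacobi_star a (b * c)%g * jacobi_star b c) ->
  forall p q r,
    \sum_u jcoef_star (p * u^-1)%g (q * u^-1)%g * jcoef_star u r =
    \sum_y jcoef_star p y * jcoef_star (q * y^-1)%g (r * y^-1)%g.
Proof.
move=> JB; apply: char_sum_inj3 => a b c.
apply: (mulfI (mulf_neq0 mV_neq0 mV_neq0)).
by rewrite -jacobiB_lhs -jacobiB_rhs JB.
Qed.

End JacobiCoefficients.

(* [sum1 x y] stands for [x + y = 1] in the would-be field [option G], [None] being 0;
   the sum of [x] and [y] is then the [z] with [x/z + y/z = 1], if any. *)
Section FieldFromUnitSums.
Variables (G : finGroupType) (R : comNzRingType) (sum1 : rel G).
Hypothesis mulGC : forall x y : G, commute x y.
Hypothesis G_nontrivial : exists r : G, r != 1%g.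
Hypothesis sum1C : symmetric sum1.
Hypothesis sum1_uniq : forall x y x' y', sum1 x y -> sum1 x' y' ->
  (x * x' = y * y')%g -> x' = y /\ y' = x.

Definition sum1_star x y : R := (sum1 x y)%:R - (x == 1%g)%:R - (y == 1%g)%:R.

Hypothesis sum1_star_assoc : forall a b c,
  \sum_u sum1_star (a * u^-1)%g (b * u^-1)%g * sum1_star u c =
  \sum_v sum1_star a v * sum1_star (b * v^-1)%g (c * v^-1)%g.

Implicit Types (x y z t : G) (X Y Z : option G).

Lemma mulGCA x y z : (x * (y * z) = y * (x * z))%g.
Proof. by rewrite !mulgA (mulGC x). Qed.

Lemma mulGACA x y z t : (x * y * (z * t) = x * z * (y * t))%g.
Proof. by rewrite -!mulgA (mulGCA y). Qed.

Definition addG x y : option G := [pick z | sum1 (x * z^-1)%g (y * z^-1)%g].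

Lemma addGP x y z : (addG x y == Some z) = sum1 (x * z^-1)%g (y * z^-1)%g.
Proof.
rewrite /addG; case: pickP => [w sw|none]; last by rewrite none.
apply/eqP/idP => [[<-] //|sz]; congr Some.
have sw' : sum1 (y * w^-1)%g (x * w^-1)%g by rewrite sum1C.
have e : (x * z^-1 * (y * w^-1) = y * z^-1 * (x * w^-1))%g.
  by rewrite mulGACA [RHS]mulGACA (mulGC x).
by have [/mulgI/invg_inj] := sum1_uniq sz sw' e.
Qed.

Lemma addGC x y : addG x y = addG y x.
Proof. by apply: eq_option => z; rewrite !addGP sum1C. Qed.

Lemma omap_mulg_eq t X z : (omap ( *%g t) X == Some z) = (X == Some (t^-1 * z)%g).
Proof. by case: X => //= w; apply/eqP/eqP => [[<-]|[->]]; rewrite ?mulKg ?mulKVg. Qed.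

Lemma addGM t x y : addG (t * x)%g (t * y)%g = omap ( *%g t) (addG x y).
Proof.
apply: eq_option => z; rewrite omap_mulg_eq !addGP.
have shift u : (u * (t^-1 * z)^-1 = t * u * z^-1)%g.
  by rewrite invMg invgK mulgA (mulGC _ t) mulgA.
by rewrite !shift.
Qed.

Definition addF X Y : option G :=
  match X, Y with
  | Some x, Some y => addG x y
  | None, _ => Y
  | _, None => X
  end.

Definition mulF X Y : option G :=
  match X, Y with
  | Some x, Some y => Some (x * y)%g
  | _, _ => None
  end.

Lemma mulF0 : right_zero None mulF.
Proof. by case. Qed.

Lemma addFC : commutative addF.
Proof. by case=> [x|] [y|] //=; rewrite addGC. Qed.

Lemma add0F : left_id None addF.
Proof. by case. Qed.

Lemma addF0 : right_id None addF.
Proof. by case. Qed.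

Lemma mulF_addG t x y : mulF (Some t) (addG x y) = addG (t * x)%g (t * y)%g.
Proof. by rewrite addGM; case: (addG x y). Qed.

Lemma mulF_addr t : {morph mulF (Some t) : X Y / addF X Y}.
Proof. by case=> [x|] [y|] //; apply: mulF_addG. Qed.

Lemma scale_eq1 t X : (mulF (Some t) X == Some 1%g) = (X == Some t^-1%g).
Proof. by case: X => //= x; rewrite !(inj_eq Some_inj) -eq_invg_mul eq_sym. Qed.

Lemma addG_eq1 x y : (addG x y == Some 1%g) = sum1 x y.
Proof. by rewrite addGP invg1 !mulg1. Qed.

Lemma sum_star_indicator (X : option G) a b (F : G -> R) :
  \sum_u ((X == Some u)%:R - (u == a)%:R - (u == b)%:R) * F u = oapp F 0 X - F a - F b.
Proof.
under eq_bigr do rewrite !mulrBl; rewrite !sumrB !sum_delta; congr (_ - _ - _).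
case: X => [w|] /=; last by rewrite big1 // => u _; rewrite mul0r.
by under eq_bigr do rewrite (inj_eq Some_inj) eq_sym; rewrite sum_delta.
Qed.

Lemma sum1_star_shift a b u :
  sum1_star (a * u^-1)%g (b * u^-1)%g =
  (addG a b == Some u)%:R - (u == a)%:R - (u == b)%:R.
Proof. by rewrite /sum1_star -addGP -!eq_mulgV1 ![(_ == u)]eq_sym. Qed.

Lemma sum1_star_oappl X c : oapp (sum1_star^~ c) 0 X =
  (addF X (Some c) == Some 1%g)%:R - (X == Some 1%g)%:R - (c == 1%g)%:R.
Proof.
case: X => [w|] /=; last by rewrite (inj_eq Some_inj) subr0 subrr.
by rewrite /sum1_star addG_eq1 (inj_eq Some_inj).
Qed.

Lemma sum1_star_oappr a X : oapp (sum1_star a) 0 X =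
  (addF (Some a) X == Some 1%g)%:R - (X == Some 1%g)%:R - (a == 1%g)%:R.
Proof.
case: X => [w|] /=; last by rewrite (inj_eq Some_inj) subr0 subrr.
by rewrite /sum1_star addG_eq1 (inj_eq Some_inj); ring.
Qed.

Lemma addF_assoc_eq1 a b c :
  (addF (Some a) (addG b c) == Some 1%g) = (addF (addG a b) (Some c) == Some 1%g).
Proof.
have := sum1_star_assoc a b c.
under eq_bigr do rewrite sum1_star_shift.
under [in X in _ = X]eq_bigr do rewrite mulrC sum1_star_shift.
rewrite !sum_star_indicator sum1_star_oappl sum1_star_oappr /sum1_star -!addG_eq1.
move=> /eqP; rewrite -subr_eq0 => /eqP eq0; apply: (@bool_natr_inj R).
by apply/eqP; rewrite -subr_eq0 -oppr_eq0 -eq0; apply/eqP; ring.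
Qed.

Lemma addFA : associative addF.
Proof.
move=> [x|] [y|] [z|] //; rewrite ?addF0 //.
apply: eq_option => w; rewrite -[w]invgK -!scale_eq1 !mulF_addr.
exact: addF_assoc_eq1.
Qed.

HB.instance Definition _ := Monoid.isComLaw.Build (option G) None addF addFA addFC add0F.

Lemma addG_opp1 : exists e, addG 1%g e = None.
Proof.
have [/existsP[e /eqP] | /existsPn no_opp] := boolP [exists e, addG 1%g e == None].
  by exists e.
have add_neq0 x y : addG x y != None.
  by rewrite -[x]mulg1 -[y](mulKVg x) addGM; case: addG (no_opp (x^-1 * y)%g).
pose S := \big[addF/None]_x Some x.
have S_neq0 : S != None.
  rewrite /S (bigD1 1%g) //=.
  by case: (\big[addF/None]_(x | x != 1%g) Some x) => //= w; apply: add_neq0.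
have [r r_neq1] := G_nontrivial.
have S_fixed : mulF (Some r) S = S.
  rewrite /S (big_morph _ (mulF_addr r) (mulF0 (Some r))).
  by rewrite [RHS](reindex_inj (mulgI r)).
move: S_fixed S_neq0; case: S => // s [] /eqP.
by rewrite -{2}[s]mul1g (inj_eq (mulIg s)) (negPf r_neq1).
Qed.

Lemma mulFA : associative mulF.
Proof. by move=> [x|] [y|] [z|] //=; rewrite mulgA. Qed.

Lemma mulFC : commutative mulF.
Proof. by move=> [x|] [y|] //=; rewrite mulGC. Qed.

Lemma mul1F : left_id (Some 1%g) mulF.
Proof. by move=> [x|] //=; rewrite mul1g. Qed.

Lemma mulF_addl : left_distributive mulF addF.
Proof. by move=> X Y [t|]; rewrite ?mulF0 // !(mulFC _ (Some t)) mulF_addr. Qed.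

Lemma field_axioms_addF_mulF : field_axioms addF mulF None (Some 1%g).
Proof.
have [e e0] := addG_opp1.
split; [exact: addFA | exact: addFC | exact: add0F | | split=> //].
- case=> [x|]; last by exists None.
  by exists (Some (x * e)%g); rewrite /= -{1}[x]mulg1 addGM e0.
- exact: mulFA.
- exact: mulFC.
- exact: mul1F.
split; first exact: mulF_addl.
by case=> [x|] // _; exists (Some x^-1%g); rewrite /= mulgV.
Qed.

End FieldFromUnitSums.

Lemma jacobi_sumE (C : numClosedFieldType) (M : finGroupType)
    (add : Fset M C -> Fset M C -> Fset M C) one a b :
  jacobi_sum add one a b =
  (#|M|%:R)^-1 * \sum_x \sum_y chv x a * chv y b * (add (Some x) (Some y) == one)%:R.
Proof.
pose P : {pred dual M C * dual M C} := [pred p | add (Some p.1) (Some p.2) == one].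
rewrite /jacobi_sum; congr (_ * _); transitivity (\sum_(p | P p) chv p.1 a * chv p.2 b).
  have -> : classical_sets.mkset (fun p => add (Some p.1) (Some p.2) = one) =
            classical_sets.mkset (fun p => p \in P).
    apply: boolp.funext => p; apply: boolp.propext.
    by rewrite /classical_sets.mkset inE; split=> [->|/eqP].
  symmetry; apply: fsbigop.bigfs; first exact: index_enum_uniq.
  by move=> p _; rewrite mem_index_enum.
rewrite big_mkcond pair_big /=; apply: eq_bigr => -[x y] _.
by rewrite /P /=; case: (_ == _); rewrite ?mulr1 ?mulr0.
Qed.

Lemma extends_dual_law_unique (C : numClosedFieldType) (M : finGroupType)
    (mul : Fset M C -> Fset M C -> Fset M C) :
  left_zero None mul -> commutative mul -> extends_dual_law mul ->
  mul = @mulF (dual M C : finGroupType).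
Proof.
move=> mul0 mulC ext; apply: boolp.funext => X; apply: boolp.funext => Y.
case: X => [x|]; last exact: mul0.
case: Y => [y|]; last by rewrite mulC mul0.
by have [z [-> zxy]] := ext x y; congr Some; apply: eq_dual => a; rewrite zxy chv_mul.
Qed.

Section JacobiField.
Variables (C : numClosedFieldType) (M : finGroupType) (J : M -> M -> C).
Hypotheses (cMM : abelian [set: M]) (M_gt1 : (1 < #|M|)%N) (JJ : is_Jacobi J).
Local Notation D := (dual M C).
Implicit Types (x y : D) (a b : M).

Let JA : forall a b, J a b = J b a. Proof. by case: JJ. Qed.
Let JB : forall a b c, jacobi_star J a b * jacobi_star J (a * b)%g c =
                       jacobi_star J a (b * c)%g * jacobi_star J b c.
Proof. by case: JJ. Qed.
Let JC : forall a1 a2 a3 a4,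
  \sum_b J (a1 * b)%g (a2 * b^-1)%g * J (a3 * b)%g (a4 * b^-1)%g =
  J (a1 * a4)%g (a2 * a3)%g.
Proof. by case: JJ. Qed.

Definition jsum1 x y := jcoef J x y == 1.

Lemma jsum1C : symmetric jsum1.
Proof. by move=> x y; rewrite /jsum1 jcoefC. Qed.

Lemma jcoef_bool x y : jcoef J x y = (jsum1 x y)%:R.
Proof.
have idem : jcoef J x y * jcoef J x y = jcoef J x y.
  have := jacobiC_coef cMM JC x y y x.
  by rewrite (dual_mulC x y) !eqxx !mul1r (jcoefC JA y x).
rewrite /jsum1; have [-> //|N_neq1] := eqVneq (jcoef J x y) 1.
move: idem => /eqP; rewrite -{3}[jcoef J x y]mulr1 -subr_eq0 -mulrBr mulf_eq0.
by rewrite subr_eq0 (negPf N_neq1) orbF => /eqP.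
Qed.

Lemma jsum1_uniq x y x' y' : jsum1 x y -> jsum1 x' y' ->
  (x * x' = y * y')%g -> x' = y /\ y' = x.
Proof.
move=> /eqP Nxy /eqP Nx'y' e; have := jacobiC_coef cMM JC x y x' y'.
rewrite Nxy Nx'y' e eqxx !mulr1.
case: eqP => [->|_]; case: eqP => [->|_] //=.
all: by rewrite ?mulr1n ?mulr0n ?mulr0 ?mul0r => /eqP; rewrite oner_eq0.
Qed.

Lemma jsum1_star x y : jcoef_star J x y = sum1_star C jsum1 x y.
Proof. by rewrite /jcoef_star jcoef_bool. Qed.

Lemma jsum1_star_assoc (p q r : D) :
  \sum_u sum1_star C jsum1 (p * u^-1)%g (q * u^-1)%g * sum1_star C jsum1 u r =
  \sum_v sum1_star C jsum1 p v * sum1_star C jsum1 (q * v^-1)%g (r * v^-1)%g.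
Proof.
under eq_bigr do rewrite -!jsum1_star; under [in X in _ = X]eq_bigr do rewrite -!jsum1_star.
exact: jacobiB_coef cMM JB p q r.
Qed.

Lemma dual_nontrivial : exists r : D, r != 1%g.
Proof.
have /card_gt1P[x [y [_ _ xy]]] : (1 < #|{: D}|)%N by rewrite card_dual.
by case: (eqVneq x 1%g) => [x1|]; [exists y; rewrite -x1 eq_sym | exists x].
Qed.

Definition jacobi_add := addF jsum1.

Let jacobi_addP x y z :
  (jacobi_add (Some x) (Some y) == Some z) = jsum1 (x * z^-1)%g (y * z^-1)%g.
Proof. exact: addGP (@dual_mulC C M) jsum1C jsum1_uniq x y z. Qed.

Lemma jacobi_field : field_axioms jacobi_add (@mulF (D : finGroupType)) None (Some 1%g).
Proof.
exact: field_axioms_addF_mulF (@dual_mulC C M) dual_nontrivial jsum1C jsum1_uniq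
         jsum1_star_assoc.
Qed.

Lemma mulF_extends_dual_law : extends_dual_law (@mulF (D : finGroupType)).
Proof. by move=> x y; exists (x * y)%g; split=> // a; rewrite chv_mul. Qed.

Lemma jacobi_sum_add a b : J a b = jacobi_sum jacobi_add (Some 1%g) a b.
Proof.
rewrite jacobi_sumE jacobi_expansion //; congr (_ * _).
apply: eq_bigr => x _; apply: eq_bigr => y _.
by rewrite jcoef_bool jacobi_addP invg1 !mulg1.
Qed.

Lemma jacobi_field_unique add mul one :
  field_axioms add mul None one -> extends_dual_law mul ->
  (forall a b, J a b = jacobi_sum add one a b) ->
  [/\ add = jacobi_add, mul = @mulF (D : finGroupType) & one = Some 1%g].
Proof.
move=> Fax ext Jsum; have mul0 := field_mul0l Fax.
case: Fax => _ addC add0 _ [_ mulC mul1 _ [mulDl _]].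
have mulE := extends_dual_law_unique mul0 mulC ext.
have oneE : one = Some 1%g.
  move: mul1 Jsum; rewrite mulE; case: one => [e|] mul1 _; last by move: (mul1 (Some 1%g)).
  by move: (mul1 (Some 1%g)); rewrite /= mulg1.
have sum1E x y : (add (Some x) (Some y) == Some 1%g) = jsum1 x y.
  apply: (@bool_natr_inj C); rewrite -jcoef_bool; move: x y; apply: char_sum_inj2 => a b.
  apply: (mulfI (invr_neq0 (m_neq0 C M))).
  by rewrite -jacobi_sumE -oneE -Jsum jacobi_expansion.
have scale t X Y : mulF (Some t) (add X Y) = add (mulF (Some t) X) (mulF (Some t) Y).
  by rewrite -mulE !(mulC (Some t)) mulDl.
split=> //; apply: boolp.funext => X; apply: boolp.funext => Y.
case: X => [x|]; last by rewrite add0.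
case: Y => [y|]; last by rewrite addC add0.
apply: eq_option => z; rewrite jacobi_addP (dual_mulC x) (dual_mulC y).
by rewrite -{1}[z]invgK -scale_eq1 scale sum1E.
Qed.

End JacobiField.

Theorem mainTheorem1 (C : numClosedFieldType) (M : finGroupType)
    (J : M -> M -> C) :
  abelian [set: M] -> (2 <= #|M|)%N -> is_Jacobi J ->
  exists! S : (Fset M C -> Fset M C -> Fset M C) *
              (Fset M C -> Fset M C -> Fset M C) * Fset M C,
    let '(add, mul, one) := S in
    [/\ field_axioms add mul None one,
        extends_dual_law mul &
        forall a b : M, J a b = jacobi_sum add one a b].
Proof.
move=> cMM M_gt1 JJ.
exists (jacobi_add J, @mulF (dual M C : finGroupType), Some 1%g); split.
  by split; [apply: jacobi_field | apply: mulF_extends_dual_law | apply: jacobi_sum_add].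
case=> [[add mul] one] [Fax ext Jsum].
by have [-> -> ->] := jacobi_field_unique cMM JJ Fax ext Jsum.
Qed.
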